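(* Let $G$ be a permutation group admitting a base $B$ of open subgroups such that for every pair $V\subseteq U$ in $B$ the group $N_G(V)/V$ is finite and $(G/U)^V=N_G(V)U/U$. Let $R$ be an associative ring and $M$ an $R\otimes\mathbb Q$-module, considered as an $R\langle G\rangle$-module with trivial $G$-action. Then every essential extension $E$ of $M$ in $\mathrm{Sm}_R(G)$ is a trivial $G$-module. In particular, if $M=M\otimes\mathbb Q$ is an injective $R$-module, then $M$ (with trivial $G$-action) is an injective object of $\mathrm{Sm}_R(G)$.
   Context: A permutation group is a Hausdorff topological group admitting a base of open sets consisting of left and right translates of subgroups. $R\langle G\rangle$ is the group ring ($G$ acts trivially on $R$); $\mathrm{Sm}_R(G)$ is the category of smooth left $R\langle G\rangle$-modules (every element has an open stabilizer). $(G/U)^V$ is the set of $V$-fixed points of $G/U$. An injection $M\hookrightarrow E$ is an essential extension if every non-zero subobject of $E$ meets $M$ non-trivially. *)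

From HB Require Import structures.
From mathcomp Require Import all_boot all_order all_algebra.
From mathcomp Require Import boolp classical_sets cardinality topology.
Set Implicit Arguments. Unset Strict Implicit. Unset Printing Implicit Defensive.
Import GRing.Theory.
Local Open Scope classical_set_scope.
Local Open Scope ring_scope.

Section GroupDefs.
Variables (G : Type) (mul : G -> G -> G) (inv : G -> G) (one : G).

Definition is_group : Prop :=
  [/\ (forall x y z, mul x (mul y z) = mul (mul x y) z),
      (forall x, mul one x = x), (forall x, mul x one = x),
      (forall x, mul (inv x) x = one) & (forall x, mul x (inv x) = one)].

Definition is_subgroup (H : set G) : Prop :=
  [/\ H one, (forall x y, H x -> H y -> H (mul x y)) & (forall x, H x -> H (inv x))].

Definition lcoset (g : G) (H : set G) : set G := [set mul g h | h in H].
Definition rcoset (H : set G) (g : G) : set G := [set mul h g | h in H].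

Definition normalizer (V : set G) : set G :=
  [set g | [set mul (mul g v) (inv g) | v in V] = V].
End GroupDefs.

Definition topological_group (G : topologicalType) (mul : G -> G -> G)
  (inv : G -> G) (one : G) : Prop :=
  [/\ is_group mul inv one,
      continuous (fun p : G * G => mul p.1 p.2) & continuous inv].

Definition permutation_group (G : topologicalType) (mul : G -> G -> G)
  (inv : G -> G) (one : G) : Prop :=
  [/\ topological_group mul inv one, hausdorff_space G &
      forall (A : set G) (x : G), open A -> A x ->
        exists (H : set G) (g : G) (T : set G),
          [/\ is_subgroup mul inv one H,
              T = lcoset mul g H \/ T = rcoset mul H g,
              open T, T x & T `<=` A]].

Definition open_subgroup_base (G : topologicalType) (mul : G -> G -> G)
  (inv : G -> G) (one : G) (B : set (set G)) : Prop :=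
  (forall U, B U -> is_subgroup mul inv one U /\ open U) /\
  (forall N, nbhs one N -> exists2 U, B U & U `<=` N).

(* (G/U)^V : the left cosets gU fixed by every v in V *)
Definition fixed_cosets (G : Type) (mul : G -> G -> G) (U V : set G) : set (set G) :=
  [set lcoset mul g U | g in [set g | forall v, V v -> lcoset mul (mul v g) U = lcoset mul g U]].

Definition Rlinear (R : pzRingType) (A B : lmodType R) (f : A -> B) : Prop :=
  forall (a : R) (x y : A), f (a *: x + y) = a *: f x + f y.

Definition is_action (G : Type) (mul : G -> G -> G) (one : G)
  (R : pzRingType) (E : lmodType R) (act : G -> E -> E) : Prop :=
  [/\ (forall x, act one x = x),
      (forall g h x, act (mul g h) x = act g (act h x)) &
      (forall g, Rlinear (act g))].

Definition smooth_action (G : topologicalType) (R : pzRingType) (E : lmodType R)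
  (act : G -> E -> E) : Prop :=
  forall x : E, open [set g : G | act g x = x].

Definition smooth_module (G : topologicalType) (mul : G -> G -> G) (one : G)
  (R : pzRingType) (E : lmodType R) (act : G -> E -> E) : Prop :=
  is_action mul one act /\ smooth_action act.

Definition trivial_action (G : Type) (R : pzRingType) (E : lmodType R) : G -> E -> E :=
  fun _ x => x.

Definition Gmorphism (G : Type) (R : pzRingType) (A B : lmodType R)
  (actA : G -> A -> A) (actB : G -> B -> B) (f : A -> B) : Prop :=
  Rlinear f /\ (forall g x, f (actA g x) = actB g (f x)).

Definition subobject (G : Type) (R : pzRingType) (E : lmodType R)
  (act : G -> E -> E) (S : set E) : Prop :=
  [/\ S 0, (forall (a : R) x y, S x -> S y -> S (a *: x + y)) &
      (forall g x, S x -> S (act g x))].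

Definition essential_extension (G : Type) (R : pzRingType) (M E : lmodType R)
  (actM : G -> M -> M) (actE : G -> E -> E) (i : M -> E) : Prop :=
  [/\ Gmorphism actM actE i, injective i &
      forall S : set E, subobject actE S -> S <> [set 0] ->
        exists m : M, i m <> 0 /\ S (i m)].

(* M is an R (x) Q - module: multiplication by every positive integer is bijective *)
Definition uniquely_divisible (R : pzRingType) (M : lmodType R) : Prop :=
  forall n : nat, (0 < n)%N -> bijective (fun x : M => x *+ n).

Definition injective_Rmodule (R : pzRingType) (M : lmodType R) : Prop :=
  forall (A B : lmodType R) (f : A -> B) (h : A -> M),
    Rlinear f -> injective f -> Rlinear h ->
    exists k : B -> M, Rlinear k /\ (forall x, k (f x) = h x).

(* injective object of Sm_R(G) (monomorphisms in Sm_R(G) are the injective morphisms) *)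
Definition injective_smooth (G : topologicalType) (mul : G -> G -> G) (one : G)
  (R : pzRingType) (M : lmodType R) (actM : G -> M -> M) : Prop :=
  forall (A B : lmodType R) (actA : G -> A -> A) (actB : G -> B -> B)
         (f : A -> B) (h : A -> M),
    smooth_module mul one actA -> smooth_module mul one actB ->
    Gmorphism actA actB f -> injective f -> Gmorphism actA actM h ->
    exists k : B -> M, Gmorphism actB actM k /\ (forall x, k (f x) = h x).

From HB Require Import structures.
From mathcomp Require Import all_boot all_algebra.
From mathcomp Require Import finmap boolp classical_sets functions cardinality fsbigop topology.
Set Implicit Arguments. Unset Strict Implicit. Unset Printing Implicit Defensive.
Import GRing.Theory.
Local Open Scope classical_set_scope.
Local Open Scope ring_scope.

(* For V in B the trace e |-> sum_{nV in N(V)/V} n.e is well defined on V-fixed vectors and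
   invariant under N(V). Call e trace-null when the traces over all small enough V in B kill it;
   in a smooth module these vectors form a subobject containing every g.e - e: if U fixes e and V
   is small enough, then V fixes gU, so (G/U)^V = N(V)U/U gives gU = nU with n in N(V).
   With trivial action the trace is multiplication by |N(V)/V| > 0, which is injective on an
   R (x) Q-module, so no nonzero element of M is trace-null. Hence an essential extension of M has
   no trace-null vectors, i.e. G acts trivially on it; and an R-linear extension to M that kills
   the trace-null vectors is automatically G-equivariant. *)

Section Rlinear.
Variables (R : pzRingType) (X Y : lmodType R) (F : X -> Y).
Hypothesis linF : Rlinear F.

Lemma Rlinear_add x y : F (x + y) = F x + F y.
Proof. by have := linF 1 x y; rewrite !scale1r. Qed.

Lemma Rlinear0 : F 0 = 0.
Proof. by apply: (@addrI _ (F 0)); rewrite -Rlinear_add !addr0. Qed.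

Lemma Rlinear_sub x y : F (x - y) = F x - F y.
Proof. by rewrite -scaleN1r addrC linF scaleN1r addrC. Qed.

Lemma Rlinear_sum (I : Type) (s : seq I) (P : I -> X) :
  F (\sum_(i <- s) P i) = \sum_(i <- s) F (P i).
Proof. by elim: s => [|i s IHs]; rewrite ?big_nil ?Rlinear0 // !big_cons Rlinear_add IHs. Qed.

End Rlinear.

Section Cosets.
Variables (G : choiceType) (mul : G -> G -> G) (inv : G -> G) (one : G).
Hypothesis groupG : is_group mul inv one.

Let mulgA : forall x y z, mul x (mul y z) = mul (mul x y) z. Proof. by case: groupG. Qed.
Let mul1g : forall x, mul one x = x. Proof. by case: groupG. Qed.
Let mulg1 : forall x, mul x one = x. Proof. by case: groupG. Qed.
Let mulVg : forall x, mul (inv x) x = one. Proof. by case: groupG. Qed.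
Let mulgV : forall x, mul x (inv x) = one. Proof. by case: groupG. Qed.
Let mulgK x y : mul (mul x y) (inv y) = x. Proof. by rewrite -mulgA mulgV mulg1. Qed.
Let mulgVK x y : mul (mul x (inv y)) y = x. Proof. by rewrite -mulgA mulVg mulg1. Qed.
Let mulKg x y : mul (inv x) (mul x y) = y. Proof. by rewrite mulgA mulVg mul1g. Qed.
Let mulKVg x y : mul x (mul (inv x) y) = y. Proof. by rewrite mulgA mulgV mul1g. Qed.

Lemma invg_unique x y : mul x y = one -> inv x = y.
Proof. by move=> xy; rewrite -[inv x]mulg1 -xy mulKg. Qed.

Lemma invgK x : inv (inv x) = x.
Proof. exact/invg_unique/mulVg. Qed.

Lemma invgM x y : inv (mul x y) = mul (inv y) (inv x).
Proof. by apply: invg_unique; rewrite mulgA mulgK mulgV. Qed.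

Lemma lcosetMr (H : set G) g w : is_subgroup mul inv one H -> H w ->
  lcoset mul (mul g w) H = lcoset mul g H.
Proof.
case=> _ HM HV Hw; apply/seteqP; split=> _ [h Hh <-].
  by exists (mul w h); [exact: HM | rewrite mulgA].
by exists (mul (inv w) h); [exact/HM/Hh/HV | rewrite -mulgA mulKVg].
Qed.

Lemma lcoset_eq (H : set G) g g' : is_subgroup mul inv one H ->
  lcoset mul g H = lcoset mul g' H -> exists2 w, H w & g = mul g' w.
Proof.
case=> H1 _ _ gH; have : lcoset mul g H g by exists one; rewrite ?mulg1.
by rewrite gH => -[w Hw <-]; exists w.
Qed.

Lemma normalizerP (V : set G) n : normalizer mul inv V n <->
  (forall v, V v -> V (mul (mul n v) (inv n))) /\
  (forall v, V v -> V (mul (mul (inv n) v) n)).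
Proof.
split=> [nV | [nVV nVVi]].
  split=> [v Vv | u]; first by rewrite -nV; exists v.
  by rewrite -{1}nV => -[v Vv <-]; rewrite -mulgA mulgVK mulKg.
apply/seteqP; split=> [_ [v Vv <-] | v Vv]; first exact: nVV.
by exists (mul (mul (inv n) v) n); [exact: nVVi | rewrite !mulgA mulgK mulgV mul1g].
Qed.

Lemma normalizer1 (V : set G) : normalizer mul inv V one.
Proof.
have inv1 : inv one = one by apply: invg_unique.
by apply/normalizerP; rewrite inv1; split=> v; rewrite mulg1 mul1g.
Qed.

Lemma normalizerV (V : set G) n :
  normalizer mul inv V n -> normalizer mul inv V (inv n).
Proof. by move=> /normalizerP[nVV nVVi]; apply/normalizerP; rewrite invgK. Qed.

Lemma normalizerM (V : set G) m n : normalizer mul inv V m ->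
  normalizer mul inv V n -> normalizer mul inv V (mul m n).
Proof.
move=> /normalizerP[mV mVi] /normalizerP[nV nVi]; apply/normalizerP; rewrite invgM.
split=> v Vv.
  by have := mV _ (nV _ Vv); rewrite !mulgA.
by have := nVi _ (mVi _ Vv); rewrite !mulgA.
Qed.

Lemma lcoset_mulr_norm (V : set G) n g g' : is_subgroup mul inv one V ->
  normalizer mul inv V n -> lcoset mul g V = lcoset mul g' V ->
  lcoset mul (mul g n) V = lcoset mul (mul g' n) V.
Proof.
move=> subV /normalizerP[_ nVi] /(lcoset_eq subV)[w Vw ->].
have -> : mul (mul g' w) n = mul (mul g' n) (mul (mul (inv n) w) n).
  by rewrite !mulgA mulgK.
exact/lcosetMr/nVi.
Qed.

Definition cosetsN (V : set G) : set (set G) :=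
  [set lcoset mul g V | g in normalizer mul inv V].

Definition coset_rep (V : set G) (c : set G) : G :=
  xget one [set g | normalizer mul inv V g /\ c = lcoset mul g V].

Lemma coset_repP V c : cosetsN V c ->
  normalizer mul inv V (coset_rep V c) /\ c = lcoset mul (coset_rep V c) V.
Proof.
move=> [g nVg <-].
exact: (@xgetI _ one [set h | normalizer mul inv V h /\ _ = lcoset mul h V] g).
Qed.

Definition coset_mulr (V : set G) n (c : set G) : set G :=
  lcoset mul (mul (coset_rep V c) n) V.

Lemma coset_mulrE V n g : is_subgroup mul inv one V ->
  normalizer mul inv V n -> normalizer mul inv V g ->
  coset_mulr V n (lcoset mul g V) = lcoset mul (mul g n) V.
Proof.
move=> subV nVn nVg; have /coset_repP[_ gV] : cosetsN V (lcoset mul g V) by exists g.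
exact/(lcoset_mulr_norm subV nVn)/esym.
Qed.

Lemma coset_mulr_bij V n : is_subgroup mul inv one V -> normalizer mul inv V n ->
  set_bij (cosetsN V) (cosetsN V) (coset_mulr V n).
Proof.
move=> subV nVn; split.
- by move=> _ [g nVg <-]; rewrite coset_mulrE //; exists (mul g n) => //; exact: normalizerM.
- move=> _ _ /set_mem[g1 nVg1 <-] /set_mem[g2 nVg2 <-].
  rewrite !coset_mulrE // => g12.
  by rewrite -(mulgK g1 n) -(mulgK g2 n); apply: lcoset_mulr_norm g12 => //; exact: normalizerV.
- move=> _ [g nVg <-]; exists (lcoset mul (mul g (inv n)) V).
    by exists (mul g (inv n)) => //; apply/normalizerM/normalizerV.
  by rewrite coset_mulrE ?mulgVK //; apply/normalizerM/normalizerV.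
Qed.

Section Trace.
Variables (R : pzRingType) (E : lmodType R) (act : G -> E -> E).

(* [fset_set] is empty, hence the trace is [0], when [N(V)/V] is infinite. *)
Definition trace (V : set G) (e : E) : E :=
  \sum_(c <- fset_set (cosetsN V)) act (coset_rep V c) e.

Lemma trace_Rlinear V : (forall g, Rlinear (act g)) -> Rlinear (trace V).
Proof.
move=> linact a x y; rewrite /trace scaler_sumr -big_split.
by apply: eq_bigr => c _; apply: linact.
Qed.

Hypothesis actE : is_action mul one act.

Lemma trace_normalizer V n e : is_subgroup mul inv one V -> finite_set (cosetsN V) ->
  normalizer mul inv V n -> (forall v, V v -> act v e = e) ->
  trace V (act n e) = trace V e.
Proof.
move=> subV finV nVn Ve; case: actE => _ actM _.
have tau_bij := coset_mulr_bij subV nVn.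
rewrite /trace -!fsbig_finite // [RHS](reindex_fsbig _ _ _ _ tau_bij).
apply: eq_fsbigr => c /set_mem/(set_bij_homo tau_bij)/coset_repP[_ tauE].
have [w Vw ->] := lcoset_eq subV (esym tauE).
by rewrite !actM (Ve w Vw).
Qed.

Lemma trace_act_fixed_coset V U h e : is_subgroup mul inv one V -> is_subgroup mul inv one U ->
  U `<=` V -> finite_set (cosetsN U) ->
  fixed_cosets mul V U = [set lcoset mul n V | n in normalizer mul inv U] ->
  (forall v, V v -> act v e = e) -> (forall u, U u -> V (mul (mul (inv h) u) h)) ->
  trace U (act h e) = trace U e.
Proof.
move=> subV subU UV finU fixedVU Ve hUV; case: actE => _ actM _.
have : fixed_cosets mul V U (lcoset mul h V).
  exists h => // u Uu; have -> : mul u h = mul h (mul (mul (inv h) u) h).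
    by rewrite mulgA mulKVg.
  exact/lcosetMr/hUV.
rewrite fixedVU => -[n nUn nVE]; have [w Vw ->] := lcoset_eq subV (esym nVE).
by rewrite actM (Ve w Vw); apply: trace_normalizer => // u /UV; exact: Ve.
Qed.

End Trace.

Lemma trace_morph (R : pzRingType) (X Y : lmodType R) (actX : G -> X -> X)
    (actY : G -> Y -> Y) (phi : X -> Y) V x :
  Gmorphism actX actY phi -> phi (trace actX V x) = trace actY V (phi x).
Proof. by case=> linphi phiE; rewrite /trace Rlinear_sum //; apply: eq_bigr. Qed.

Lemma trace_trivial_eq0 (R : pzRingType) (M : lmodType R) V (m : M) :
  uniquely_divisible M -> finite_set (cosetsN V) ->
  trace (@trivial_action G R M) V m = 0 -> m = 0.
Proof.
move=> divM finV; rewrite /trace /trivial_action big_const_seq count_predT iter_addr_0.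
set k := size _; have /divM[divide mulrnK _] : (0 < k)%N.
  rewrite cardfs_gt0; apply/fset0Pn; exists (lcoset mul one V).
  by rewrite in_fset_set //; apply/mem_set; exists one => //; exact: normalizer1.
by move=> m0; rewrite -(mulrnK m) /= m0 -{1}(mul0rn M k) mulrnK.
Qed.

End Cosets.

Section InjectiveExtension.
Variables (R : pzRingType) (M : lmodType R).
Hypothesis injM : injective_Rmodule M.

Section Submodule.
Variables (X : lmodType R) (C : set X).
Hypotheses (C0 : C 0) (Clin : forall (a : R) x y, C x -> C y -> C (a *: x + y)).

Definition submod_pred : pred X := fun x => `[< C x >].

Lemma submod_pred_closed : subsemimod_closed submod_pred.
Proof.
split; first split.
- exact/asboolP.
- by move=> x y /asboolP Cx /asboolP Cy; apply/asboolP; have := Clin 1 Cx Cy; rewrite scale1r.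
- by move=> a x /asboolP Cx; apply/asboolP; have := Clin a Cx C0; rewrite addr0.
Qed.

Definition submod : Type := {x : X | submod_pred x}.
HB.instance Definition _ := SubType.on submod.
HB.instance Definition _ := Choice.on submod.
HB.instance Definition _ :=
  GRing.SubChoice_isSubLmodule.Build R X submod_pred submod submod_pred_closed.

Lemma Rlinear_extend_partial (psi : X -> M) :
  (forall a x y, C x -> C y -> psi (a *: x + y) = a *: psi x + psi y) ->
  exists k : X -> M, Rlinear k /\ (forall x, C x -> k x = psi x).
Proof.
move=> linpsi; have linval : Rlinear (val : submod -> X).
  by move=> a x y; rewrite GRing.valD GRing.valZ.
have valC (x : submod) : C (val x) by apply/asboolP/(valP x).
have [|k [link kE]] := injM linval val_inj (h := psi \o val).
  by move=> a x y /=; apply: linpsi; apply: valC.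
by exists k; split=> // x Cx; exact: (kE (exist _ x (asboolT Cx))).
Qed.

End Submodule.

Lemma Rlinear_extend_vanishing (A X : lmodType R) (f : A -> X) (h : A -> M) (S : set X) :
  S 0 -> (forall (a : R) x y, S x -> S y -> S (a *: x + y)) ->
  Rlinear f -> Rlinear h -> (forall a, S (f a) -> h a = 0) ->
  exists k : X -> M, [/\ Rlinear k, forall a, k (f a) = h a & forall s, S s -> k s = 0].
Proof.
move=> S0 Slin linf linh hS.
have SD a x y a1 a2 : S (x - f a1) -> S (y - f a2) -> S (a *: x + y - f (a *: a1 + a2)).
  move=> Sx Sy; have := Slin a _ _ Sx Sy.
  by rewrite linf scalerBr addrACA opprD.
pose psi x := h (xget 0 [set a | S (x - f a)]).
have psiE x a : S (x - f a) -> psi x = h a.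
  move=> Sxa; have Sxa' := @xgetI _ 0 [set a | S (x - f a)] a Sxa.
  apply/eqP; rewrite -subr_eq0 -(Rlinear_sub linh); apply/eqP/hS; rewrite Rlinear_sub //.
  by have := Slin (-1) _ _ Sxa' Sxa; rewrite scaleN1r opprB addrA subrK.
pose C := [set x | exists a, S (x - f a)].
have [k [link kE]] : exists k : X -> M, Rlinear k /\ (forall x, C x -> k x = psi x).
  apply: (@Rlinear_extend_partial X C).
  - by exists 0; rewrite (Rlinear0 linf) subr0.
  - by move=> a x y [a1 Sx] [a2 Sy]; exists (a *: a1 + a2); exact: SD.
  - move=> a x y [a1 Sx] [a2 Sy].
    by rewrite (psiE x a1) // (psiE y a2) // (psiE _ _ (SD a _ _ _ _ Sx Sy)) linh.
exists k; split=> // [a | s Ss].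
  have Sfa : S (f a - f a) by rewrite subrr.
  by rewrite kE ?(psiE _ a) //; exists a.
have Ss0 : S (s - f 0) by rewrite (Rlinear0 linf) subr0.
by rewrite kE ?(psiE _ 0) ?(Rlinear0 linh) //; exists 0.
Qed.

End InjectiveExtension.

Section SmoothModules.
Variables (G : topologicalType) (mul : G -> G -> G) (inv : G -> G) (one : G).
Variable B : set (set G).
Hypotheses (permG : permutation_group mul inv one)
  (baseB : open_subgroup_base mul inv one B).
Hypothesis cosetsB : forall U V : set G, B U -> B V -> V `<=` U ->
  finite_set [set lcoset mul g V | g in normalizer mul inv V] /\
  fixed_cosets mul U V = [set lcoset mul n U | n in normalizer mul inv V].

Let groupG : is_group mul inv one. Proof. by case: permG => -[]. Qed.

Lemma continuous_mull a : continuous (mul a).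
Proof.
move=> x; case: permG => -[_ mulC _] _ _.
apply: (continuous_comp (f := pair a)) (mulC (a, x)).
by apply: cvg_pair; [exact: cvg_cst | exact: cvg_id].
Qed.

Lemma continuous_mulr a : continuous (mul^~ a).
Proof.
move=> x; case: permG => -[_ mulC _] _ _.
apply: (continuous_comp (f := pair^~ a)) (mulC (x, a)).
by apply: cvg_pair; [exact: cvg_id | exact: cvg_cst].
Qed.

Lemma base_subset W : open W -> W one -> exists2 U, B U & U `<=` W.
Proof. by move=> oW W1; apply: baseB.2; apply: open_nbhs_nbhs. Qed.

Lemma base_subgroup U : B U -> is_subgroup mul inv one U.
Proof. by move=> /baseB.1[]. Qed.

Lemma base_subsetI V1 V2 : B V1 -> B V2 -> exists2 U, B U & U `<=` V1 `&` V2.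
Proof.
move=> /baseB.1[[V1one _ _] oV1] /baseB.1[[V2one _ _] oV2].
by apply: base_subset; [exact: openI | exact: conj].
Qed.

Lemma base_conj V h : B V -> exists2 U, B U & forall u, U u -> V (mul (mul (inv h) u) h).
Proof.
move=> /baseB.1[[Vone _ _] oV]; case: groupG => _ _ mulg1 mulVg _.
have conjC : continuous (mul^~ h \o mul (inv h)).
  by move=> u; exact: (continuous_comp (@continuous_mull (inv h) u) (@continuous_mulr h _)).
have [U BU UV] : exists2 U, B U & U `<=` (mul^~ h \o mul (inv h)) @^-1` V.
  by apply: base_subset; [exact: (continuousP _).1 | rewrite /preimage /= mulg1 mulVg].
by exists U.
Qed.

Section TraceNull.
Variables (R : pzRingType) (E : lmodType R) (act : G -> E -> E).

Definition trace_null : set E := [set e | exists2 V0, B V0 &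
  forall U, B U -> U `<=` V0 -> trace mul inv one act U e = 0].

Hypothesis actE : is_action mul one act.

Let linact g : Rlinear (act g). Proof. by case: actE. Qed.
Let linear_trace U : Rlinear (trace mul inv one act U) := trace_Rlinear mul inv one U linact.

Lemma trace_null0 : trace_null 0.
Proof.
have [V BV _] := @base_subset setT openT I.
by exists V => // U _ _; rewrite (Rlinear0 (linear_trace U)).
Qed.

Lemma trace_null_lin (a : R) x y : trace_null x -> trace_null y -> trace_null (a *: x + y).
Proof.
move=> [V1 BV1 x0] [V2 BV2 y0]; have [V BV VV12] := base_subsetI BV1 BV2.
exists V => // U BU UV; rewrite linear_trace.
by rewrite x0 ?y0 ?scaler0 ?addr0 // => u /UV /VV12[].
Qed.

Hypothesis smoothE : smooth_action act.

Lemma fixing_base_subgroup e : exists2 V, B V & forall v, V v -> act v e = e.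
Proof. by case: actE => act1 _ _; apply: (@base_subset [set g | act g e = e]). Qed.

Lemma trace_null_act_sub h e : trace_null (act h e - e).
Proof.
have [V BV Ve] := fixing_base_subgroup e.
have [V' BV' hV'] := base_conj h BV.
have [V0 BV0 V0V] := base_subsetI BV BV'.
exists V0 => // U BU UV0; have UV u : U u -> V u by move=> /UV0 /V0V[].
have [finU fixedVU] := cosetsB BV BU UV.
have hUV u : U u -> V (mul (mul (inv h) u) h) by move=> /UV0 /V0V[_ /hV'].
rewrite (Rlinear_sub (linear_trace U)).
by rewrite (trace_act_fixed_coset groupG actE (base_subgroup BV) (base_subgroup BU) UV finU
  fixedVU Ve hUV) subrr.
Qed.

Lemma trace_null_subobject : subobject act trace_null.
Proof.
split; [exact: trace_null0 | exact: trace_null_lin | move=> h e Ne].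
by have := trace_null_lin 1 Ne (trace_null_act_sub h e); rewrite scale1r addrC subrK.
Qed.

End TraceNull.

Section TraceNullMorphisms.
Variables (R : pzRingType) (X Y : lmodType R).
Variables (actX : G -> X -> X) (actY : G -> Y -> Y) (phi : X -> Y).
Hypothesis phiG : Gmorphism actX actY phi.

Lemma trace_null_morph x : trace_null actX x -> trace_null actY (phi x).
Proof.
move=> [V BV x0]; exists V => // U BU UV.
by rewrite -(trace_morph _ _ _ _ _ phiG) x0 // (Rlinear0 phiG.1).
Qed.

Lemma trace_null_inj x : injective phi -> trace_null actY (phi x) -> trace_null actX x.
Proof.
move=> phi_inj [V BV phix0]; exists V => // U BU UV; apply: phi_inj.
by rewrite (trace_morph _ _ _ _ _ phiG) phix0 // (Rlinear0 phiG.1).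
Qed.

End TraceNullMorphisms.

Lemma trace_null_trivial (R : pzRingType) (M : lmodType R) (m : M) :
  uniquely_divisible M -> trace_null (@trivial_action G R M) m -> m = 0.
Proof.
move=> divM [V BV m0]; have [finV _] := cosetsB BV BV (@subset_refl _ _).
exact: (trace_trivial_eq0 groupG divM finV (m0 V BV (@subset_refl _ _))).
Qed.

Section TrivialModule.
Variables (R : pzRingType) (M : lmodType R).
Hypothesis divM : uniquely_divisible M.

Lemma essential_extension_trivial (E : lmodType R) (actE : G -> E -> E) (i : M -> E) :
  smooth_module mul one actE -> essential_extension (@trivial_action G R M) actE i ->
  forall g x, actE g x = x.
Proof.
move=> [actP smoothE] [iG i_inj iess] g x.
have null0 : trace_null actE = [set 0].
  apply: contrapT => /(iess _ (trace_null_subobject actP smoothE))[m [im0 Nim]].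
  apply: im0; rewrite (trace_null_trivial divM (trace_null_inj iG i_inj Nim)).
  exact: Rlinear0 iG.1.
by have := trace_null_act_sub actP smoothE g x; rewrite null0 => /subr0_eq.
Qed.

Lemma injective_smooth_trivial :
  injective_Rmodule M -> injective_smooth mul one (@trivial_action G R M).
Proof.
move=> injM A X actA actX f h _ [actXE smoothX] fG f_inj hG.
have hS a : trace_null actX (f a) -> h a = 0.
  by move=> /(trace_null_inj fG f_inj)/(trace_null_morph hG)/(trace_null_trivial divM).
have [k [link kf kS]] := Rlinear_extend_vanishing injM (trace_null0 actXE)
  (trace_null_lin actXE) fG.1 hG.1 hS.
exists k; split=> //; split=> // g x; rewrite /trivial_action -[actX g x](subrK x).
by rewrite (Rlinear_add link) kS ?add0r //; exact: trace_null_act_sub.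
Qed.

End TrivialModule.
End SmoothModules.

Theorem lemmaA11 (G : topologicalType) (mul : G -> G -> G) (inv : G -> G) (one : G)
  (B : set (set G)) :
  permutation_group mul inv one ->
  open_subgroup_base mul inv one B ->
  (forall U V : set G, B U -> B V -> V `<=` U ->
     finite_set [set lcoset mul g V | g in normalizer mul inv V] /\
     fixed_cosets mul U V = [set lcoset mul n U | n in normalizer mul inv V]) ->
  forall (R : pzRingType) (M : lmodType R),
    uniquely_divisible M ->
    (forall (E : lmodType R) (actE : G -> E -> E) (i : M -> E),
       smooth_module mul one actE ->
       essential_extension (@trivial_action G R M) actE i ->
       forall (g : G) (x : E), actE g x = x) /\
    (injective_Rmodule M -> injective_smooth mul one (@trivial_action G R M)).
Proof.
move=> permG baseB cosetsB R M divM; split.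
  exact: essential_extension_trivial permG baseB cosetsB R M divM.
exact: injective_smooth_trivial permG baseB cosetsB R M divM.
Qed.
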